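(* Assume (A1) and (A4). Consider Algorithm 2 with parameter choice (P1), and any inner iteration $k$ of any stage $s$. Set $\mu^k=\nabla\hat F_{i_k}(x^k)+A^T\lambda^{k+1}$. Then $x^{k+1}=x^k-\eta_sG_k^{-1}\mu^k$, and $$-2\eta_s\langle\mu^k,x^k-x^*\rangle+\eta_s^2\|\mu^k\|_{G_k^{-1}}^2\le-2\eta_s\big(F(x^{k+1})-F(x^* )\big)-2\eta_s\langle\nabla\hat F_{i_k}(x^k)-\nabla F(x^k),x^{k+1}-x^*\rangle+2\eta_s\langle A^T\lambda^{k+1},x^*-x^{k+1}\rangle.$$
   Context: Standing setup. Let $n,m,p,q,r,l\ge1$. For $j\in\{1,\dots,m\}$ let $g_j:\mathbb R^q\to\mathbb R^r$ be continuously differentiable with Jacobian $\partial g_j(x)\in\mathbb R^{r\times q}$; for $i\in\{1,\dots,n\}$ let $f_i:\mathbb R^r\to\mathbb R$ be continuously differentiable. Set $g(x)=\frac1m\sum_{j=1}^m g_j(x)$, $F_i(x)=f_i(g(x))$, $F(x)=\frac1n\sum_{i=1}^nF_i(x)$. Let $R:\mathbb R^l\to\mathbb R$ be closed convex, $A\in\mathbb R^{p\times q}$, $B\in\mathbb R^{p\times l}$; the problem is $\min_{x,\omega}F(x)+R(\omega)$ s.t. $Ax+B\omega=0$, with optimal primal–dual solution $(x^*,\omega^*,\lambda^* )$. $\|\cdot\|$ is the Euclidean norm; for positive definite $H$, $\|x\|_H^2=x^THx$. Assumptions. (A1) Each $F_i$ is convex, $R$ is convex, an optimal primal–dual solution exists,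 and all $x$-points arising lie in a bounded set. (A4) There is $L_F>0$ with $\|(\partial g_j(x))^T\nabla f_i(g(x))-(\partial g_j(y))^T\nabla f_i(g(y))\|\le L_F\|x-y\|$ for all $i,j,x,y$. Algorithm 2 (inputs: integers $S,K\ge1$, $\rho>0$, stepsizes $\eta_s>0$, matrices $G_k$ per stage as below; initial $\tilde x^0=\hat x^0$, $\hat\omega^0$, $\hat\lambda^0$, $\hat G^0=I$). For $s=1,\dots,S$: set $\tilde x=\tilde x^{s-1}$, $x^0=\hat x^{s-1}$, $\omega^0=\hat\omega^{s-1}$, $\lambda^0=\hat\lambda^{s-1}$, $G_0=\hat G^{s-1}$; compute $g(\tilde x)$, $\nabla F(\tilde x)$. For $k=0,\dots,K-1$: (a) $\omega^{k+1}\in\arg\min_\omega R(\omega)+\langle\lambda^k,B\omega\rangle+\frac\rho2\|Ax^k+B\omega\|^2$; (b) compute $g(x^k)$ exactly; (c) draw $i_k$ uniform on $\{1,\dots,n\}$ and $j_k$ uniform on $\{1,\dots,m\}$, independently, and set $\nabla\hat F_{i_k}(x^k)=(\partial g_{j_k}(x^k))^T\nabla f_{i_k}(g(x^k))-(\partial g_{j_k}(\tilde x))^T\nabla f_{i_k}(g(\tilde x))+\nabla F(\tilde x)$; (d) $x^{k+1}=\arg\min_x\langle\nabla\hat F_{i_k}(x^k),x-x^k\rangle+\langle\lambda^k,Ax\rangle+\frac\rho2\|Ax+B\omega^{k+1}\|^2+\frac1{2\eta_s}\|x-x^k\|_{G_k}^2$; (e) $\lambda^{k+1}=\lambda^k+\rho(Ax^{k+1}+B\omega^{k+1})$.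 End of stage $s$: $\tilde x^s=\frac1K\sum_{k=1}^Kx^k$, $\tilde\omega^s=\frac1K\sum_{k=1}^K\omega^k$, $\hat x^s=x^K$, $\hat\omega^s=\omega^K$, $\hat\lambda^s=\lambda^K$, $\hat G^s=G_K$. Parameter choice (P1): $\eta_s=\frac1{(s+1)L_F}$, and in stage $s$ the matrices $G_0,\dots,G_K$ are scalar multiples of the identity with $\frac1sI=G_0\succeq G_1\succeq\dots\succeq G_{K-1}=G_K=\frac1{s+1}I$. *)

From HB Require Import structures.
From Stdlib Require Import Reals.
From mathcomp Require Import all_boot.

Set Implicit Arguments.
Unset Strict Implicit.
Unset Printing Implicit Defensive.

Local Open Scope R_scope.

Lemma Rplus_assoc' : associative Rplus.
Proof. by move=> x y z; rewrite Rplus_assoc. Qed.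
Lemma Rplus_comm' : commutative Rplus.
Proof. exact: Rplus_comm. Qed.
Lemma Rplus_0_l' : left_id 0 Rplus.
Proof. exact: Rplus_0_l. Qed.
HB.instance Definition _ := Monoid.isComLaw.Build R 0 Rplus
  Rplus_assoc' Rplus_comm' Rplus_0_l'.

Definition vec (d : nat) := 'I_d -> R.
Definition mat (a b : nat) := 'I_a -> 'I_b -> R.

Definition rsum (d : nat) (F : 'I_d -> R) : R := \big[Rplus/0]_(i < d) F i.

Definition dot (d : nat) (u v : vec d) : R := rsum (fun i => u i * v i).
Definition vnorm (d : nat) (u : vec d) : R := sqrt (dot u u).
Definition vadd (d : nat) (u v : vec d) : vec d := fun i => u i + v i.
Definition vsub (d : nat) (u v : vec d) : vec d := fun i => u i - v i.
Definition vscal (d : nat) (a : R) (u : vec d) : vec d := fun i => a * u i.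

Definition mv (a b : nat) (M : mat a b) (v : vec b) : vec a :=
  fun i => rsum (fun j => M i j * v j).
Definition mtv (a b : nat) (M : mat a b) (u : vec a) : vec b :=
  fun j => rsum (fun i => M i j * u i).
Definition msub (a b : nat) (M N : mat a b) : mat a b := fun i j => M i j - N i j.
Definition mfrob (a b : nat) (M : mat a b) : R :=
  sqrt (rsum (fun i => rsum (fun j => M i j ^ 2))).

(* u^T (c I) u : squared norm w.r.t. the scalar matrix c I *)
Definition sqnormS (d : nat) (c : R) (u : vec d) : R := dot u (vscal c u).

Definition ravg (k : nat) (F : 'I_k -> R) : R := / INR k * rsum F.
Definition vavg (d k : nat) (F : 'I_k -> vec d) : vec d :=
  fun i => / INR k * rsum (fun t => F t i).
Definition mavg (a b k : nat) (F : 'I_k -> mat a b) : mat a b :=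
  fun i j => / INR k * rsum (fun t => F t i j).

Definition has_grad (d : nat) (f : vec d -> R) (gf : vec d -> vec d) : Prop :=
  forall x eps, 0 < eps -> exists del, 0 < del /\
    forall y, vnorm (vsub y x) < del ->
      Rabs (f y - f x - dot (gf x) (vsub y x)) <= eps * vnorm (vsub y x).
Definition C1_grad (d : nat) (f : vec d -> R) (gf : vec d -> vec d) : Prop :=
  has_grad f gf /\
  forall x eps, 0 < eps -> exists del, 0 < del /\
    forall y, vnorm (vsub y x) < del -> vnorm (vsub (gf y) (gf x)) < eps.

Definition has_jac (a b : nat) (g : vec b -> vec a) (J : vec b -> mat a b) : Prop :=
  forall x eps, 0 < eps -> exists del, 0 < del /\
    forall y, vnorm (vsub y x) < del ->
      vnorm (vsub (vsub (g y) (g x)) (mv (J x) (vsub y x)))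
        <= eps * vnorm (vsub y x).
Definition C1_jac (a b : nat) (g : vec b -> vec a) (J : vec b -> mat a b) : Prop :=
  has_jac g J /\
  forall x eps, 0 < eps -> exists del, 0 < del /\
    forall y, vnorm (vsub y x) < del -> mfrob (msub (J y) (J x)) < eps.

Definition convex_fun (d : nat) (h : vec d -> R) : Prop :=
  forall x y t, 0 <= t <= 1 ->
    h (vadd (vscal t x) (vscal (1 - t) y)) <= t * h x + (1 - t) * h y.

Definition is_argmin (d : nat) (phi : vec d -> R) (z : vec d) : Prop :=
  forall y, phi z <= phi y.

Section Problem.
Variables (n m q r : nat).
Variables (g : 'I_m -> vec q -> vec r) (Jg : 'I_m -> vec q -> mat r q).
Variables (f : 'I_n -> vec r -> R) (gradf : 'I_n -> vec r -> vec r).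

Definition gmap (x : vec q) : vec r := vavg (fun j => g j x).
Definition Fi (i : 'I_n) (x : vec q) : R := f i (gmap x).
Definition Fobj (x : vec q) : R := ravg (fun i => Fi i x).
Definition Jgmap (x : vec q) : mat r q := mavg (fun j => Jg j x).
Definition gradF (x : vec q) : vec q :=
  vavg (fun i => mtv (Jgmap x) (gradf i (gmap x))).
Definition vrgrad (i : 'I_n) (j : 'I_m) (x xt : vec q) : vec q :=
  vadd (vsub (mtv (Jg j x) (gradf i (gmap x)))
             (mtv (Jg j xt) (gradf i (gmap xt))))
       (gradF xt).

Variables (p l : nat) (A : mat p q) (B : mat p l) (Reg : vec l -> R).

Definition Lag (x : vec q) (w : vec l) (lam : vec p) : R :=
  Fobj x + Reg w + dot lam (vadd (mv A x) (mv B w)).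

Definition opt_primal_dual (xs : vec q) (ws : vec l) (ls : vec p) : Prop :=
  (forall lam, Lag xs ws lam <= Lag xs ws ls) /\
  (forall x w, Lag xs ws ls <= Lag x w ls).

(* A run of Algorithm 2.  Stage s (1 <= s <= S), inner index k (0 <= k <= K):
   x s k = x^k, om s k = omega^k, lam s k = lambda^k of stage s;
   xt s = tilde x^s (xt 0 = tilde x^0);  G_k of stage s is (gam s k) * I;
   ik s k, jk s k are the sampled indices i_k, j_k (an arbitrary realization). *)
Definition alg2_run (S K : nat) (rho : R) (eta : nat -> R) (gam : nat -> nat -> R)
  (ik : nat -> nat -> 'I_n) (jk : nat -> nat -> 'I_m)
  (x0 : vec q) (om0 : vec l) (lam0 : vec p)
  (x : nat -> nat -> vec q) (om : nat -> nat -> vec l) (lam : nat -> nat -> vec p)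
  (xt : nat -> vec q) : Prop :=
  xt 0%N = x0 /\ x 1%N 0%N = x0 /\ om 1%N 0%N = om0 /\ lam 1%N 0%N = lam0 /\
  (forall s, (2 <= s <= S)%N ->
     x s 0%N = x s.-1 K /\ om s 0%N = om s.-1 K /\ lam s 0%N = lam s.-1 K) /\
  (forall s, (1 <= s <= S)%N ->
     xt s = (fun i => / INR K * \big[Rplus/0]_(1 <= k < K.+1) x s k i)) /\
  (forall s k, (1 <= s <= S)%N -> (k < K)%N ->
     is_argmin (fun w => Reg w + dot (lam s k) (mv B w)
                         + rho / 2 * vnorm (vadd (mv A (x s k)) (mv B w)) ^ 2)
               (om s k.+1) /\
     (* (d), with snapshot tilde x = tilde x^{s-1} *)
     is_argmin (fun z => dot (vrgrad (ik s k) (jk s k) (x s k) (xt s.-1)) (vsub z (x s k))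
                         + dot (lam s k) (mv A z)
                         + rho / 2 * vnorm (vadd (mv A z) (mv B (om s k.+1))) ^ 2
                         + / (2 * eta s) * sqnormS (gam s k) (vsub z (x s k)))
               (x s k.+1) /\
     lam s k.+1 = vadd (lam s k) (vscal rho (vadd (mv A (x s k.+1)) (mv B (om s k.+1))))).

End Problem.

From HB Require Import structures.
From Stdlib Require Import Reals.
From mathcomp Require Import all_boot.
From Stdlib Require Import Lra Lia FunctionalExtensionality.
Local Open Scope R_scope.

(* Step (d) minimises a strongly convex quadratic, so its first-order condition
   reads mu^k = -(G_k / eta_s) (x^(k+1) - x^k), which is the first claim.
   Substituting it and writing X = x^(k+1) - xs, the inequality reduces to
   F(x^(k+1)) - F(xs) <= <grad F(x^k), X> + G_k / (2 eta_s) |x^(k+1) - x^k|^2.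
   This is the sum of the descent lemma at x^k (grad F is L_F-Lipschitz by (A4))
   and the gradient inequality for the convex F, since under (P1)
   G_k >= G_(K-1) = 1 / (s + 1) = L_F eta_s.  Derivatives of F are only taken
   along lines: the chain rule for f_i o g gives the directional derivatives and
   the mean value theorem gives the descent lemma. *)

Set Implicit Arguments.
Unset Strict Implicit.

Section FiniteSums.
Variable d : nat.
Implicit Types F G : 'I_d -> R.

Lemma rsum_ext F G : (forall i, F i = G i) -> rsum F = rsum G.
Proof. by move=> h; apply: eq_bigr => i _. Qed.

Lemma rsum_add F G : rsum (fun i => F i + G i) = rsum F + rsum G.
Proof. exact: big_split. Qed.

Lemma rsum_scal c F : rsum (fun i => c * F i) = c * rsum F.
Proof.
apply: (big_rec2 (fun y1 y2 => y1 = c * y2)); first by ring.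
by move=> i y1 y2 _ ->; ring.
Qed.

Lemma rsum_scalr c F : rsum (fun i => F i * c) = rsum F * c.
Proof. by rewrite Rmult_comm -rsum_scal; apply: rsum_ext => i; ring. Qed.

Lemma rsum_sub F G : rsum (fun i => F i - G i) = rsum F - rsum G.
Proof.
rewrite (rsum_ext (G := fun i => F i + -1 * G i)); last by move=> i; ring.
by rewrite rsum_add rsum_scal; ring.
Qed.

Lemma rsum_le F G : (forall i, F i <= G i) -> rsum F <= rsum G.
Proof.
move=> h; apply: (big_rec2 (fun y1 y2 => y1 <= y2)); first lra.
by move=> i y1 y2 _ hy; have := h i; lra.
Qed.

Lemma rsum_ge0 F : (forall i, 0 <= F i) -> 0 <= rsum F.
Proof.
move=> h; apply: (big_rec (fun y => 0 <= y)); first lra.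
by move=> i y _ hy; have := h i; lra.
Qed.

Lemma rsum_const c : rsum (fun _ : 'I_d => c) = INR d * c.
Proof.
rewrite /rsum big_const card_ord; elim: d => [|k IH]; first by rewrite /=; ring.
by rewrite iterS IH S_INR; ring.
Qed.

Lemma rsum_ge_term F i0 : (forall i, 0 <= F i) -> F i0 <= rsum F.
Proof.
move=> h; rewrite /rsum (bigD1 i0) //=; set rest := bigop _ _ _.
have : 0 <= rest.
  apply: (big_rec (fun y => 0 <= y)); first lra.
  by move=> i y _ hy; have := h i; lra.
lra.
Qed.

End FiniteSums.

Lemma rsum_swap a b (F : 'I_a -> 'I_b -> R) :
  rsum (fun i => rsum (fun j => F i j)) = rsum (fun j => rsum (fun i => F i j)).
Proof. exact: exchange_big. Qed.

Lemma rsum_prod a b (F : 'I_a -> R) (G : 'I_b -> R) :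
  rsum (fun i => rsum (fun j => F i * G j)) = rsum F * rsum G.
Proof. by rewrite -rsum_scalr; apply: rsum_ext => i; rewrite rsum_scal. Qed.

Section Vectors.
Variable d : nat.
Implicit Types u v w : vec d.

Lemma vext u v : (forall i, u i = v i) -> u = v.
Proof. by move=> h; apply: functional_extensionality. Qed.

Lemma dot_comm u v : dot u v = dot v u.
Proof. by apply: rsum_ext => i; ring. Qed.

Lemma dot_addl u v w : dot (vadd u v) w = dot u w + dot v w.
Proof. by rewrite /dot -rsum_add; apply: rsum_ext => i; rewrite /vadd; ring. Qed.

Lemma dot_subl u v w : dot (vsub u v) w = dot u w - dot v w.
Proof. by rewrite /dot -rsum_sub; apply: rsum_ext => i; rewrite /vsub; ring. Qed.

Lemma dot_scall c u w : dot (vscal c u) w = c * dot u w.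
Proof. by rewrite /dot -rsum_scal; apply: rsum_ext => i; rewrite /vscal; ring. Qed.

Lemma dot_addr u v w : dot w (vadd u v) = dot w u + dot w v.
Proof. by rewrite dot_comm dot_addl !(dot_comm w). Qed.

Lemma dot_subr u v w : dot w (vsub u v) = dot w u - dot w v.
Proof. by rewrite dot_comm dot_subl !(dot_comm w). Qed.

Lemma dot_scalr c u w : dot w (vscal c u) = c * dot w u.
Proof. by rewrite /dot -rsum_scal; apply: rsum_ext => i; rewrite /vscal; ring. Qed.

Lemma dot_self_ge0 u : 0 <= dot u u.
Proof. by apply: rsum_ge0 => i; nra. Qed.

Lemma dot_self_le0 u : dot u u <= 0 -> u = (fun _ => 0).
Proof.
move=> h; apply: vext => i.
have : u i * u i <= dot u u by apply: (@rsum_ge_term _ (fun j => u j * u j)) => j; nra.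
nra.
Qed.

Lemma vnorm_ge0 u : 0 <= vnorm u.
Proof. exact: sqrt_pos. Qed.

Lemma vnorm_sq u : vnorm u ^ 2 = dot u u.
Proof. by rewrite /vnorm pow2_sqrt //; apply: dot_self_ge0. Qed.

(* Lagrange's identity: the sum of all (u_i v_j - u_j v_i)^2 is 2 (|u|^2 |v|^2 - <u,v>^2). *)
Lemma dot_sq_le u v : dot u v ^ 2 <= dot u u * dot v v.
Proof.
have : 0 <= rsum (fun i => rsum (fun j => (u i * v j - u j * v i) ^ 2)).
  by apply: rsum_ge0 => i; apply: rsum_ge0 => j; apply: pow2_ge_0.
rewrite (rsum_ext (G := fun i => rsum (fun j => (u i * u i) * (v j * v j))
         + rsum (fun j => (v i * v i) * (u j * u j))
         + -2 * rsum (fun j => (u i * v i) * (u j * v j)))); last first.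
  by move=> i; rewrite -rsum_scal -!rsum_add; apply: rsum_ext => j; ring.
rewrite !rsum_add rsum_scal !rsum_prod /dot; lra.
Qed.

Lemma Rabs_dot_le u v : Rabs (dot u v) <= vnorm u * vnorm v.
Proof.
rewrite /vnorm -sqrt_mult_alt; last exact: dot_self_ge0.
rewrite -sqrt_Rsqr_abs; apply: sqrt_le_1_alt.
by have := dot_sq_le u v; rewrite /Rsqr; lra.
Qed.

Lemma dot_le u v : dot u v <= vnorm u * vnorm v.
Proof. by have := Rabs_dot_le u v; have := Rle_abs (dot u v); lra. Qed.

Lemma vnorm_scal c u : vnorm (vscal c u) = Rabs c * vnorm u.
Proof.
rewrite /vnorm dot_scall dot_scalr -Rmult_assoc sqrt_mult_alt; last nra.
by rewrite -sqrt_Rsqr_abs.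
Qed.

Lemma vnorm_triangle u v : vnorm (vadd u v) <= vnorm u + vnorm v.
Proof.
have hu := vnorm_ge0 u; have hv := vnorm_ge0 v.
rewrite -(sqrt_pow2 (vnorm u + vnorm v)); last lra.
rewrite /vnorm; apply: sqrt_le_1_alt.
rewrite dot_addl !dot_addr (dot_comm v u).
have := dot_le u v; rewrite -/(vnorm u) -/(vnorm v).
by have := vnorm_sq u; have := vnorm_sq v; nra.
Qed.

End Vectors.

Section Matrices.
Variables a b : nat.
Variable M : mat a b.

Lemma mv_add (u v : vec b) : mv M (vadd u v) = vadd (mv M u) (mv M v).
Proof. by apply: vext => i; rewrite /mv /vadd -rsum_add; apply: rsum_ext => j; ring. Qed.

Lemma mv_scal c (u : vec b) : mv M (vscal c u) = vscal c (mv M u).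
Proof. by apply: vext => i; rewrite /mv /vscal -rsum_scal; apply: rsum_ext => j; ring. Qed.

Lemma mtv_add (u v : vec a) : mtv M (vadd u v) = vadd (mtv M u) (mtv M v).
Proof. by apply: vext => j; rewrite /mtv /vadd -rsum_add; apply: rsum_ext => i; ring. Qed.

Lemma mtv_scal c (u : vec a) : mtv M (vscal c u) = vscal c (mtv M u).
Proof. by apply: vext => j; rewrite /mtv /vscal -rsum_scal; apply: rsum_ext => i; ring. Qed.

Lemma dot_mv (u : vec a) (v : vec b) : dot u (mv M v) = dot (mtv M u) v.
Proof.
rewrite /dot /mv /mtv.
rewrite (rsum_ext (G := fun i => rsum (fun j => u i * M i j * v j))); last first.
  by move=> i; rewrite -rsum_scal; apply: rsum_ext => j; ring.
rewrite rsum_swap; apply: rsum_ext => j.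
by rewrite -rsum_scalr; apply: rsum_ext => i; ring.
Qed.

End Matrices.

Lemma Rinv_INR_ge0 k : 0 <= / INR k.
Proof.
case: k => [|k]; first by rewrite /= Rinv_0; lra.
by apply/Rlt_le/Rinv_0_lt_compat/lt_0_INR; lia.
Qed.

Section Averages.
Variable k : nat.

Lemma ravg_le (F : 'I_k -> R) c : (0 < k)%N -> (forall t, F t <= c) -> ravg F <= c.
Proof.
move=> hk h; have hkR : 0 < INR k by apply/lt_0_INR/ltP.
have := rsum_le h; rewrite rsum_const /ravg => hs.
apply: (Rmult_le_reg_l (INR k)) => //.
by rewrite -Rmult_assoc Rinv_r; lra.
Qed.

Lemma ravg_sub (F G : 'I_k -> R) : ravg (fun t => F t - G t) = ravg F - ravg G.
Proof. by rewrite /ravg rsum_sub; ring. Qed.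

Lemma vnorm_vavg d (F : 'I_k -> vec d) : vnorm (vavg F) <= ravg (fun t => vnorm (F t)).
Proof.
have -> : vavg F = vscal (/ INR k) (fun i => rsum (fun t => F t i)) by [].
rewrite vnorm_scal Rabs_pos_eq; last exact: Rinv_INR_ge0.
rewrite /ravg; apply: Rmult_le_compat_l; first exact: Rinv_INR_ge0.
rewrite /rsum; elim: (index_enum _) => [|t s IH].
  rewrite big_nil (_ : (fun i => _) = vscal 0 (fun _ : 'I_d => 0)).
    by rewrite vnorm_scal Rabs_R0; lra.
  by apply: vext => i; rewrite big_nil /vscal; ring.
rewrite big_cons; apply: Rle_trans (Rplus_le_compat_l _ _ _ IH).
rewrite (_ : (fun i => _) = vadd (F t) (fun i => \big[Rplus/0]_(t' <- s) F t' i)).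
  exact: vnorm_triangle.
by apply: vext => i; rewrite big_cons.
Qed.

Lemma dot_vavg d (F : 'I_k -> vec d) (w : vec d) :
  dot (vavg F) w = ravg (fun t => dot (F t) w).
Proof.
rewrite /dot /vavg /ravg.
rewrite (rsum_ext (G := fun i => rsum (fun t => / INR k * (F t i * w i)))); last first.
  by move=> i; rewrite Rmult_assoc -rsum_scalr -rsum_scal; apply: rsum_ext => t; ring.
by rewrite rsum_swap -rsum_scal; apply: rsum_ext => t; rewrite rsum_scal.
Qed.

Lemma mtv_mavg a b (F : 'I_k -> mat a b) (w : vec a) :
  mtv (mavg F) w = vavg (fun t => mtv (F t) w).
Proof.
apply: vext => j; rewrite /mtv /mavg /vavg.
rewrite (rsum_ext (G := fun i => rsum (fun t => / INR k * (F t i j * w i)))); last first.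
  by move=> i; rewrite Rmult_assoc -rsum_scalr -rsum_scal; apply: rsum_ext => t; ring.
by rewrite rsum_swap -rsum_scal; apply: rsum_ext => t; rewrite rsum_scal.
Qed.

Lemma mv_mavg a b (F : 'I_k -> mat a b) (w : vec b) :
  mv (mavg F) w = vavg (fun t => mv (F t) w).
Proof.
apply: vext => i; rewrite /mv /mavg /vavg.
rewrite (rsum_ext (G := fun j => rsum (fun t => / INR k * (F t i j * w j)))); last first.
  by move=> j; rewrite Rmult_assoc -rsum_scalr -rsum_scal; apply: rsum_ext => t; ring.
by rewrite rsum_swap -rsum_scal; apply: rsum_ext => t; rewrite rsum_scal.
Qed.

End Averages.

Lemma Rlt_mul_of_lt_div a b c : 0 < c -> a < b / c -> a * c < b.
Proof.
move=> hc h; have := Rmult_lt_compat_r c _ _ hc h.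
by rewrite /Rdiv Rmult_assoc Rinv_l ?Rmult_1_r //; lra.
Qed.

Lemma delta_forall_finite (I : finType) (Q : I -> R -> Prop) :
  (forall i e e', 0 < e' <= e -> Q i e -> Q i e') ->
  (forall i, exists e, 0 < e /\ Q i e) -> exists e, 0 < e /\ forall i, Q i e.
Proof.
move=> mono h.
suff [e [he H]] : exists e, 0 < e /\ forall i, i \in enum I -> Q i e.
  by exists e; split => // i; apply: H; rewrite mem_enum.
elim: (enum I) => [|a s [e [he H]]]; first by exists 1; split => //; lra.
have [ea [hea Ha]] := h a.
have hmin : 0 < Rmin e ea by apply: Rmin_pos.
exists (Rmin e ea); split => // i; rewrite in_cons => /orP [/eqP -> | hi].
  by apply: (mono a ea) => //; split => //; apply: Rmin_r.
by apply: (mono i e); [split => //; apply: Rmin_l | apply: H].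
Qed.

Lemma has_jac_vavg a b k (G : 'I_k -> vec b -> vec a) (J : 'I_k -> vec b -> mat a b) :
  (0 < k)%N -> (forall t, has_jac (G t) (J t)) ->
  has_jac (fun x => vavg (fun t => G t x)) (fun x => mavg (fun t => J t x)).
Proof.
move=> hk hG x eps heps.
have [del [hdel H]] := @delta_forall_finite _
  (fun t del => forall y, vnorm (vsub y x) < del ->
     vnorm (vsub (vsub (G t y) (G t x)) (mv (J t x) (vsub y x))) <= eps * vnorm (vsub y x))
  ltac:(by move=> t e e' he' He y hy; apply: He; lra) (fun t => hG t x eps heps).
exists del; split => // y hy.
rewrite mv_mavg (_ : vsub _ _ = vavg (fun t =>
    vsub (vsub (G t y) (G t x)) (mv (J t x) (vsub y x)))).
  by apply: Rle_trans (vnorm_vavg _) _; apply: ravg_le => // t; apply: H.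
by apply: vext => i; rewrite /vsub /vavg !rsum_sub; ring.
Qed.

Section ChainRule.
Variables a b : nat.
Variables (G : vec b -> vec a) (J : vec b -> mat a b).
Variables (f : vec a -> R) (gf : vec a -> vec a).
Hypothesis hG : has_jac G J.
Hypothesis hf : has_grad f gf.

Lemma has_jac_line z v eps : 0 < eps -> exists del, 0 < del /\ forall u, Rabs u < del ->
  vnorm (vsub (vsub (G (vadd z (vscal u v))) (G z)) (vscal u (mv (J z) v))) <= eps * Rabs u.
Proof.
move=> heps; have hN := vnorm_ge0 v.
have [del [hdel H]] := @hG z (eps / (vnorm v + 1)) ltac:(apply: Rdiv_lt_0_compat; lra).
exists (del / (vnorm v + 1)); split => [|u hu]; first by apply: Rdiv_lt_0_compat; lra.
have E : vsub (vadd z (vscal u v)) z = vscal u v.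
  by apply: vext => i; rewrite /vsub /vadd /vscal; ring.
have hu' : Rabs u * (vnorm v + 1) < del by apply: Rlt_mul_of_lt_div => //; lra.
have := H (vadd z (vscal u v)) ltac:(rewrite E vnorm_scal; have := Rabs_pos u; nra).
rewrite E -mv_scal vnorm_scal => /Rle_trans; apply.
have -> : eps / (vnorm v + 1) * (Rabs u * vnorm v) =
  eps * Rabs u * (vnorm v / (vnorm v + 1)) by field; lra.
rewrite -[X in _ <= X]Rmult_1_r; apply: Rmult_le_compat_l.
  by have := Rabs_pos u; nra.
by apply: (Rmult_le_reg_r (vnorm v + 1)); [lra | field_simplify; lra].
Qed.

Lemma comp_line_error z v eps : 0 < eps -> exists del, 0 < del /\ forall u, Rabs u < del ->
  Rabs (f (G (vadd z (vscal u v))) - f (G z) - u * dot (gf (G z)) (mv (J z) v))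
    <= eps * Rabs u.
Proof.
move=> heps.
set Jv := mv (J z) v; set w := gf (G z).
have hJv := vnorm_ge0 Jv; have hw := vnorm_ge0 w.
set K := vnorm Jv + 1; set W := vnorm w + 1.
have hK : 0 < K by rewrite /K; lra.
have hW : 0 < W by rewrite /W; lra.
have [df [hdf Hf]] := @hf (G z) (eps / (2 * K)) ltac:(apply: Rdiv_lt_0_compat; lra).
have heps' : 0 < Rmin 1 (eps / (2 * W)).
  by apply: Rmin_pos; [lra | apply: Rdiv_lt_0_compat; lra].
have hm1 := Rmin_l 1 (eps / (2 * W)); have hm2 := Rmin_r 1 (eps / (2 * W)).
have [dg [hdg Hg]] := has_jac_line z v heps'.
exists (Rmin dg (df / K)); split => [|u hu].
  by apply: Rmin_pos => //; apply: Rdiv_lt_0_compat; lra.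
have hu1 : Rabs u < dg by have := Rmin_l dg (df / K); lra.
have huK : Rabs u * K < df.
  by apply: Rlt_mul_of_lt_div => //; have := Rmin_r dg (df / K); lra.
have hu0 := Rabs_pos u.
set Dg := vsub (G (vadd z (vscal u v))) (G z).
have HG : vnorm (vsub Dg (vscal u Jv)) <= Rmin 1 (eps / (2 * W)) * Rabs u := Hg u hu1.
have hDg : vnorm Dg <= K * Rabs u.
  rewrite (_ : Dg = vadd (vscal u Jv) (vsub Dg (vscal u Jv))); last first.
    by apply: vext => i; rewrite /vadd /vsub /vscal; ring.
  apply: Rle_trans (vnorm_triangle _ _) _; rewrite vnorm_scal /K; nra.
have Hfirst := Hf (G (vadd z (vscal u v))) ltac:(rewrite -/Dg; nra); rewrite -/Dg -/w in Hfirst.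
have Hsecond : Rabs (dot w (vsub Dg (vscal u Jv))) <= eps / 2 * Rabs u.
  apply: Rle_trans (Rabs_dot_le _ _) _.
  have hR := vnorm_ge0 (vsub Dg (vscal u Jv)).
  have : vnorm w * vnorm (vsub Dg (vscal u Jv)) <= W * (eps / (2 * W) * Rabs u).
    apply: Rmult_le_compat => //; first by rewrite /W; lra.
    by apply: Rle_trans HG _; apply: Rmult_le_compat_r.
  by have -> : W * (eps / (2 * W) * Rabs u) = eps / 2 * Rabs u by field; lra.
have Hfirst' : eps / (2 * K) * vnorm Dg <= eps / 2 * Rabs u.
  have -> : eps / 2 * Rabs u = eps / (2 * K) * (K * Rabs u) by field; lra.
  by apply: Rmult_le_compat_l => //; apply/Rlt_le/Rdiv_lt_0_compat; lra.
rewrite dot_subr dot_scalr in Hsecond.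
rewrite (_ : _ - _ - _ = (f (G (vadd z (vscal u v))) - f (G z) - dot w Dg)
                         + (dot w Dg - u * dot w Jv)); last by ring.
by apply: Rle_trans (Rabs_triang _ _) _; lra.
Qed.

End ChainRule.

Lemma derivable_pt_lim_of_error (phi : R -> R) t l :
  (forall eps, 0 < eps -> exists del, 0 < del /\ forall u, Rabs u < del ->
     Rabs (phi (t + u) - phi t - u * l) <= eps * Rabs u) ->
  derivable_pt_lim phi t l.
Proof.
move=> H eps heps; have [del [hdel Hdel]] := H (eps / 2) ltac:(lra).
exists (mkposreal del hdel) => u hu0 /= hu.
have hu' : 0 < Rabs u by apply: Rabs_pos_lt.
have -> : (phi (t + u) - phi t) / u - l = (phi (t + u) - phi t - u * l) * / u.
  by field.
rewrite Rabs_mult Rabs_inv; apply: (Rmult_lt_reg_r (Rabs u)) => //.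
rewrite Rmult_assoc Rinv_l; last lra.
by have := Hdel u hu; nra.
Qed.

Lemma derivable_pt_lim_rsum k (phi : 'I_k -> R -> R) (l : 'I_k -> R) t :
  (forall i, derivable_pt_lim (phi i) t (l i)) ->
  derivable_pt_lim (fun t => rsum (fun i => phi i t)) t (rsum l).
Proof.
move=> h; rewrite /rsum; elim: (index_enum _) => [|i s IH].
  rewrite big_nil (_ : (fun _ => _) = fct_cte 0); first exact: derivable_pt_lim_const.
  by apply: functional_extensionality => t'; rewrite big_nil.
rewrite big_cons (_ : (fun _ => _) =
    (phi i + fun t' => \big[Rplus/0]_(j <- s) phi j t')%F).
  exact: derivable_pt_lim_plus.
by apply: functional_extensionality => t'; rewrite big_cons.
Qed.

(* Gradients in the weak sense of derivatives along lines, which is all that the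
   descent lemma and the convexity inequality use. *)
Definition line_grad d (F : vec d -> R) (G : vec d -> vec d) : Prop :=
  forall x v t, derivable_pt_lim (fun t => F (vadd x (vscal t v))) t
                                 (dot (G (vadd x (vscal t v))) v).

Lemma line_grad_comp a b (G : vec b -> vec a) (J : vec b -> mat a b)
    (f : vec a -> R) (gf : vec a -> vec a) :
  has_jac G J -> has_grad f gf ->
  line_grad (fun x => f (G x)) (fun x => mtv (J x) (gf (G x))).
Proof.
move=> hG hf x v t; apply: derivable_pt_lim_of_error => eps heps.
have [del [hdel H]] := comp_line_error hG hf (vadd x (vscal t v)) v heps.
exists del; split => // u hu.
rewrite -dot_mv (_ : vadd x (vscal (t + u) v) = vadd (vadd x (vscal t v)) (vscal u v)).
  exact: H.
by apply: vext => i; rewrite /vadd /vscal; ring.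
Qed.

Lemma line_grad_ravg d k (F : 'I_k -> vec d -> R) (G : 'I_k -> vec d -> vec d) :
  (forall i, line_grad (F i) (G i)) ->
  line_grad (fun x => ravg (fun i => F i x)) (fun x => vavg (fun i => G i x)).
Proof.
move=> hF x v t; rewrite dot_vavg /ravg.
apply: (derivable_pt_lim_scal (fun t => rsum (fun i => F i (vadd x (vscal t v))))).
by apply: (derivable_pt_lim_rsum (phi := fun i t => F i (vadd x (vscal t v)))) => i; apply: hF.
Qed.

Lemma convex_fun_ravg d k (F : 'I_k -> vec d -> R) :
  (forall i, convex_fun (F i)) -> convex_fun (fun x => ravg (fun i => F i x)).
Proof.
move=> hF x y t ht; rewrite /ravg.
have := rsum_le (fun i => hF i x y t ht); rewrite rsum_add !rsum_scal => h.
by have := Rmult_le_compat_l _ _ _ (Rinv_INR_ge0 k) h; lra.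
Qed.

Section SmoothConvex.
Variable d : nat.
Variables (F : vec d -> R) (G : vec d -> vec d).
Hypothesis hFG : line_grad F G.

Lemma line_grad_descent L x y :
  (forall a b v, dot (vsub (G a) (G b)) v <= L * vnorm (vsub a b) * vnorm v) ->
  F y <= F x + dot (G x) (vsub y x) + L / 2 * vnorm (vsub y x) ^ 2.
Proof.
move=> hG.
set v := vsub y x; set D := dot (G x) v; set N := vnorm v ^ 2.
pose psi t := F (vadd x (vscal t v)) - t * D - L / 2 * N * t ^ 2.
pose dpsi t := dot (G (vadd x (vscal t v))) v - D - L * N * t.
have Hd c : derivable_pt_lim psi c (dpsi c).
  have -> : dpsi c = dot (G (vadd x (vscal c v))) v - D * 1
                     - L / 2 * N * (INR 2 * c ^ Nat.pred 2) by rewrite /dpsi /=; field.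
  apply: derivable_pt_lim_ext (derivable_pt_lim_minus _ _ _ _ _
    (derivable_pt_lim_minus _ _ _ _ _ (hFG x v c)
       (derivable_pt_lim_scal _ D _ _ (derivable_pt_lim_id c)))
    (derivable_pt_lim_scal _ (L / 2 * N) _ _ (derivable_pt_lim_pow c 2))) => t.
  by rewrite /psi /minus_fct /mult_real_fct /Ranalysis1.id; ring.
have [c [E hc]] := MVT_cor2 psi dpsi 0 1 ltac:(lra) (fun c _ => Hd c).
(* Along the segment the gradient moves by at most L |c| |v|. *)
have Hle : dpsi c <= 0.
  have := hG (vadd x (vscal c v)) x v.
  rewrite (_ : vsub (vadd x (vscal c v)) x = vscal c v); last first.
    by apply: vext => i; rewrite /vadd /vscal /vsub; ring.
  rewrite vnorm_scal Rabs_pos_eq; last lra.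
  rewrite dot_subl -/D /dpsi /N /=.
  by have := vnorm_ge0 v; nra.
have E0 : vadd x (vscal 0 v) = x by apply: vext => i; rewrite /vadd /vscal; ring.
have E1 : vadd x (vscal 1 v) = y by apply: vext => i; rewrite /vadd /vscal /v /vsub; ring.
by move: E; rewrite /psi E0 E1; nra.
Qed.

Lemma convex_line_grad_ge x y :
  convex_fun F -> F x + dot (G x) (vsub y x) <= F y.
Proof.
move=> hconv; set v := vsub y x; set D := dot (G x) v.
have E0 : vadd x (vscal 0 v) = x by apply: vext => i; rewrite /vadd /vscal; ring.
have Hd := hFG x v 0; rewrite E0 -/D in Hd.
apply: Rnot_lt_le => hlt.
have [del Hdel] := Hd (D - (F y - F x)) ltac:(lra).
have hdel := cond_pos del.
set u := Rmin (del / 2) (1 / 2).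
have hu0 : 0 < u by apply: Rmin_pos; lra.
have hu1 : u <= 1 / 2 by apply: Rmin_r.
have hu2 : u <= del / 2 by apply: Rmin_l.
have := Hdel u ltac:(lra) ltac:(rewrite Rabs_pos_eq; lra).
rewrite Rplus_0_l E0 => /Rabs_def2 [_ hquot].
(* Convexity bounds the difference quotient at u by F y - F x. *)
have hconv_u : F (vadd x (vscal u v)) <= u * F y + (1 - u) * F x.
  rewrite (_ : vadd x (vscal u v) = vadd (vscal u y) (vscal (1 - u) x)).
    by apply: hconv; lra.
  by apply: vext => i; rewrite /vadd /vscal /v /vsub; ring.
have : (F (vadd x (vscal u v)) - F x) / u <= F y - F x.
  apply: (Rmult_le_reg_r u) => //.
  by rewrite /Rdiv Rmult_assoc Rinv_l; nra.
lra.
Qed.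

End SmoothConvex.

Section Objective.
Variables n m q r : nat.
Hypotheses (hn : (1 <= n)%N) (hm : (1 <= m)%N).
Variables (g : 'I_m -> vec q -> vec r) (Jg : 'I_m -> vec q -> mat r q).
Variables (f : 'I_n -> vec r -> R) (gradf : 'I_n -> vec r -> vec r).

Lemma Fobj_line_grad :
  (forall j, C1_jac (g j) (Jg j)) -> (forall i, C1_grad (f i) (gradf i)) ->
  line_grad (Fobj g f) (gradF g Jg gradf).
Proof.
move=> hg hf; apply: (line_grad_ravg (F := fun i x => f i (gmap g x))) => i.
by apply: line_grad_comp (hf i).1; apply: has_jac_vavg => // j; apply: (hg j).1.
Qed.

Lemma gradF_lipschitz LF :
  (forall i j x y, vnorm (vsub (mtv (Jg j x) (gradf i (gmap g x)))
                              (mtv (Jg j y) (gradf i (gmap g y))))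
                     <= LF * vnorm (vsub x y)) ->
  forall a b v, dot (vsub (gradF g Jg gradf a) (gradF g Jg gradf b)) v
                  <= LF * vnorm (vsub a b) * vnorm v.
Proof.
move=> hA4 a b v.
have gradF_dot x : dot (gradF g Jg gradf x) v =
    ravg (fun i => ravg (fun j => dot (mtv (Jg j x) (gradf i (gmap g x))) v)).
  by rewrite dot_vavg; congr ravg; apply: functional_extensionality => i;
     rewrite /Jgmap mtv_mavg dot_vavg.
rewrite dot_subl !gradF_dot -ravg_sub; apply: ravg_le => // i.
rewrite -ravg_sub; apply: ravg_le => // j.
by rewrite -dot_subl; apply: Rle_trans (dot_le _ _) _; apply/Rmult_le_compat_r/hA4/vnorm_ge0.
Qed.

End Objective.

Lemma nonpos_of_le_sq_scaled N C : (forall t, 0 < t -> t * N <= t ^ 2 * C) -> N <= 0.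
Proof.
move=> h; apply: Rnot_lt_le => hN.
have hC := Rabs_pos C; have hCC := Rle_abs C.
set t := N / (2 * (Rabs C + 1)).
have ht : 0 < t by apply: Rdiv_lt_0_compat; lra.
have htC : t * Rabs C <= N / 2.
  have -> : t * Rabs C = N / 2 * (Rabs C / (Rabs C + 1)) by rewrite /t; field; lra.
  rewrite -[X in _ <= X]Rmult_1_r; apply: Rmult_le_compat_l; first lra.
  by apply: (Rmult_le_reg_r (Rabs C + 1)); [lra | field_simplify; lra].
by have := h t ht; nra.
Qed.

Section ProximalStep.
Variables q p : nat.
Variables (A : mat p q) (c : vec p) (a xk : vec q) (lam : vec p) (rho eta gam : R).

(* The objective of step (d) when [a] is the stochastic gradient and
   [c = B omega^(k+1)], and its gradient. *)
Definition prox_obj (z : vec q) : R :=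
  dot a (vsub z xk) + dot lam (mv A z)
  + rho / 2 * vnorm (vadd (mv A z) c) ^ 2 + / (2 * eta) * sqnormS gam (vsub z xk).

Definition prox_grad (z : vec q) : vec q :=
  vadd (vadd a (mtv A lam))
       (vadd (vscal rho (mtv A (vadd (mv A z) c))) (vscal (gam / eta) (vsub z xk))).

Lemma prox_obj_expand z w : eta <> 0 ->
  prox_obj (vadd z w) = prox_obj z + dot (prox_grad z) w
                        + rho / 2 * dot (mv A w) (mv A w) + gam / (2 * eta) * dot w w.
Proof.
move=> heta; rewrite /prox_obj /prox_grad.
rewrite (_ : vsub (vadd z w) xk = vadd (vsub z xk) w); last first.
  by apply: vext => i; rewrite /vsub /vadd; ring.
rewrite mv_add (_ : vadd (vadd (mv A z) (mv A w)) c = vadd (vadd (mv A z) c) (mv A w)); last first.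
  by apply: vext => i; rewrite /vadd; ring.
set e := vsub z xk; set P := vadd (mv A z) c; clearbody e P.
rewrite !vnorm_sq /sqnormS !dot_scalr !dot_addl !dot_addr !dot_scall.
rewrite -!(dot_mv A) (dot_comm (mv A w) P) (dot_comm w e).
by field.
Qed.

Lemma argmin_prox_grad z :
  0 <= rho -> 0 < eta -> 0 < gam -> is_argmin prox_obj z -> prox_grad z = (fun _ => 0).
Proof.
move=> hrho heta hgam hmin; apply: dot_self_le0.
set G := prox_grad z.
apply: (nonpos_of_le_sq_scaled (C := rho / 2 * dot (mv A G) (mv A G)
                                       + gam / (2 * eta) * dot G G)) => t ht.
have := hmin (vadd z (vscal (- t) G)).
rewrite prox_obj_expand; last lra.
by rewrite mv_scal !dot_scall !dot_scalr -/G; nra.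
Qed.

End ProximalStep.

(* The descent lemma at xk plus the convexity inequality at xk, once the step
   e / gm along mu = ghat + b is at most 1 / L. *)
Lemma gradient_step_estimate d (F : vec d -> R) (gF ghat b xk x' xs : vec d) L e gm :
  0 < e -> 0 < gm -> L * e <= gm ->
  x' = vsub xk (vscal e (vscal (/ gm) (vadd ghat b))) ->
  F x' <= F xk + dot gF (vsub x' xk) + L / 2 * vnorm (vsub x' xk) ^ 2 ->
  F xk + dot gF (vsub xs xk) <= F xs ->
  - 2 * e * dot (vadd ghat b) (vsub xk xs) + e ^ 2 * sqnormS (/ gm) (vadd ghat b)
  <= - 2 * e * (F x' - F xs) - 2 * e * dot (vsub ghat gF) (vsub x' xs)
     + 2 * e * dot b (vsub xs x').
Proof.
move=> he hgm hLe hx hdesc hconv.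
set mu := vadd ghat b; set X := vsub x' xs; set kap := e / gm.
have hkap : 0 < kap by apply: Rdiv_lt_0_compat.
have hLkap : L * kap <= 1.
  by apply: (Rmult_le_reg_r gm) => //; rewrite /kap; field_simplify; lra.
have Ed : vsub x' xk = vscal (- kap) mu.
  by apply: vext => i; rewrite hx /mu /vadd /vsub /vscal /kap; field; lra.
have Ek : vsub xk xs = vadd X (vscal kap mu).
  by apply: vext => i; rewrite /X hx /mu /vadd /vsub /vscal /kap; field; lra.
have Es : vsub xs xk = vsub (vscal (- kap) mu) X.
  by apply: vext => i; rewrite /X hx /mu /vadd /vsub /vscal /kap; field; lra.
have Es' : vsub xs x' = vscal (-1) X by apply: vext => i; rewrite /X /vsub /vscal; ring.
rewrite Ed vnorm_sq !dot_scall !dot_scalr in hdesc.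
rewrite Es dot_subr dot_scalr in hconv.
have EmuX : dot mu X = dot ghat X + dot b X by rewrite /mu dot_addl.
rewrite Ek Es' /sqnormS dot_addr !dot_scalr dot_subl EmuX.
set N := dot mu mu in hdesc *; have hN : 0 <= N := dot_self_ge0 mu.
have hLN : L * kap * (kap * N) <= kap * N.
  by have := Rmult_le_compat_r (kap * N) _ _ ltac:(nra) hLkap; lra.
have hF : F x' - F xs <= dot gF X + kap * N / 2 by nra.
have -> : e ^ 2 * (/ gm * N) = e * (kap * N) by rewrite /kap; field; lra.
by nra.
Qed.

Lemma nonincreasing_le (u : nat -> R) K :
  (forall k, (k < K)%N -> u k.+1 <= u k) -> forall k, (k <= K)%N -> u K <= u k.
Proof.
move=> hu k hkK.
suff H : forall j, (k <= j <= K)%N -> u j <= u k by apply: H; rewrite leqnn hkK.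
elim=> [|j IH] /andP [hkj hjK].
  by move: hkj; rewrite leqn0 => /eqP ->; lra.
move: hkj; rewrite leq_eqVlt => /orP [/eqP -> | hkj]; first lra.
by have := hu j hjK; have := IH ltac:(by rewrite -ltnS hkj ltnW); lra.
Qed.

Unset Implicit Arguments.

Theorem lemma7
  (n m p q r l : nat)
  (hn : (1 <= n)%N) (hm : (1 <= m)%N) (hp : (1 <= p)%N)
  (hq : (1 <= q)%N) (hr : (1 <= r)%N) (hl : (1 <= l)%N)
  (g : 'I_m -> vec q -> vec r) (Jg : 'I_m -> vec q -> mat r q)
  (f : 'I_n -> vec r -> R) (gradf : 'I_n -> vec r -> vec r)
  (Reg : vec l -> R) (A : mat p q) (B : mat p l)
  (hg : forall j, C1_jac (g j) (Jg j))
  (hf : forall i, C1_grad (f i) (gradf i))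
  (hFconv : forall i, convex_fun (Fi g f i))
  (hRconv : convex_fun Reg)
  (xs : vec q) (ws : vec l) (ls : vec p)
  (hopt : opt_primal_dual g f A B Reg xs ws ls)
  (LF : R) (hLF : 0 < LF)
  (hA4 : forall i j x y,
     vnorm (vsub (mtv (Jg j x) (gradf i (gmap g x)))
                 (mtv (Jg j y) (gradf i (gmap g y))))
       <= LF * vnorm (vsub x y))
  (S K : nat) (hS : (1 <= S)%N) (hK : (1 <= K)%N) (rho : R) (hrho : 0 < rho)
  (eta : nat -> R) (gam : nat -> nat -> R)
  (ik : nat -> nat -> 'I_n) (jk : nat -> nat -> 'I_m)
  (x0 : vec q) (om0 : vec l) (lam0 : vec p)
  (x : nat -> nat -> vec q) (om : nat -> nat -> vec l) (lam : nat -> nat -> vec p)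
  (xt : nat -> vec q)
  (hrun : alg2_run g Jg gradf A B Reg S K rho eta gam ik jk x0 om0 lam0 x om lam xt)
  (hbdd : exists M, (forall s k, (s <= S)%N -> (k <= K)%N -> vnorm (x s k) <= M) /\
                    (forall s, (s <= S)%N -> vnorm (xt s) <= M))
  (heta : forall s, (1 <= s <= S)%N -> eta s = / (INR s.+1 * LF))
  (hG : forall s, (1 <= s <= S)%N ->
     gam s 0%N = / INR s /\ gam s K.-1 = / INR s.+1 /\ gam s K = / INR s.+1 /\
     (forall k, (k < K)%N -> gam s k.+1 <= gam s k))
  (s k : nat) (hs : (1 <= s <= S)%N) (hk : (k < K)%N) :
  let ghat := vrgrad g Jg gradf (ik s k) (jk s k) (x s k) (xt s.-1) in
  let mu := vadd ghat (mtv A (lam s k.+1)) in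
  x s k.+1 = vsub (x s k) (vscal (eta s) (vscal (/ gam s k) mu)) /\
  - 2 * eta s * dot mu (vsub (x s k) xs) + eta s ^ 2 * sqnormS (/ gam s k) mu
  <= - 2 * eta s * (Fobj g f (x s k.+1) - Fobj g f xs)
     - 2 * eta s * dot (vsub ghat (gradF g Jg gradf (x s k))) (vsub (x s k.+1) xs)
     + 2 * eta s * dot (mtv A (lam s k.+1)) (vsub xs (x s k.+1)).
Proof.
move=> ghat mu.
have [_ [_ [_ [_ [_ [_ hstep]]]]]] := hrun.
have [_ [hargmin hlam]] := hstep s k hs hk.
have [_ [_ [hgamK hgam_mono]]] := hG s hs.
have hsR : 0 < INR s.+1 by apply: lt_0_INR; lia.
have heta_pos : 0 < eta s by rewrite heta //; apply: Rinv_0_lt_compat; nra.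
(* (P1): LF * eta_s = 1 / (s + 1) = G_(K-1) <= G_k, i.e. the step is at most 1 / LF. *)
have hstep_size : LF * eta s <= gam s k.
  rewrite (_ : LF * eta s = gam s K); last by rewrite hgamK heta //; field; lra.
  exact: nonincreasing_le hgam_mono _ (ltnW hk).
have hgam_pos : 0 < gam s k by nra.
(* Stationarity of step (d), rewritten with lambda^(k+1) from step (e). *)
have hx_next : x s k.+1 = vsub (x s k) (vscal (eta s) (vscal (/ gam s k) mu)).
  have Emu : mu = vadd ghat (vadd (mtv A (lam s k))
                   (vscal rho (mtv A (vadd (mv A (x s k.+1)) (mv B (om s k.+1)))))).
    by rewrite /mu hlam mtv_add mtv_scal.
  apply: vext => i.
  have := f_equal (fun v => v i) (argmin_prox_grad (Rlt_le _ _ hrho) heta_pos hgam_pos hargmin).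
  rewrite Emu /prox_grad /vadd /vsub /vscal /= => hi.
  set dual := mtv A (lam s k) i in hi *; set penalty := mtv A _ i in hi *.
  have -> : ghat i + (dual + rho * penalty) = - (gam s k / eta s) * (x s k.+1 i - x s k i).
    by rewrite /ghat; lra.
  by field; lra.
split => //.
apply: (gradient_step_estimate (L := LF)) hx_next _ _ => //.
- exact: line_grad_descent (Fobj_line_grad hm hg hf) _ _ _ (gradF_lipschitz hn hm hA4).
- exact: convex_line_grad_ge (Fobj_line_grad hm hg hf) _ _ (convex_fun_ravg hFconv).
Qed.
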